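(* Let $\gamma>0$ and $\lambda_k\coloneqq-\gamma+ik$ for $k\in\mathbb{N}$. Let $A$ be the diagonal operator on $\ell^2$ given by $A(\zeta_k)_{k\in\mathbb{N}}=(\lambda_k\zeta_k)_{k\in\mathbb{N}}$ with domain $D(A)=\{(\zeta_k)\in\ell^2:(\lambda_k\zeta_k)\in\ell^2\}$ (which generates an exponentially stable $C_0$-semigroup). Then for every $\alpha>0$, \[ \liminf_{t\to\infty} t^{\alpha/2}\big\|e^{A^{-1}t}(-A)^{-\alpha}\big\|\ge\Big(\frac{\alpha}{2e\gamma}\Big)^{\alpha/2}. \]
   Context: $\ell^2$ is the Hilbert space of square-summable complex sequences. For this diagonal operator, $e^{A^{-1}t}(-A)^{-\alpha}$ is the diagonal operator with entries $e^{t/\lambda_k}(-\lambda_k)^{-\alpha}$ (principal branch). *)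

From Stdlib Require Import Reals.
From Coquelicot Require Import Coquelicot.
Open Scope R_scope.

(* Principal argument in (-PI, PI]. *)
Definition Carg (z : C) : R :=
  let x := Re z in let y := Im z in
  if Rlt_dec 0 x then atan (y / x)
  else if Rlt_dec x 0 then
         (if Rle_dec 0 y then atan (y / x) + PI else atan (y / x) - PI)
  else if Rlt_dec 0 y then PI / 2
  else if Rlt_dec y 0 then - (PI / 2)
  else 0.

Definition Cexp (w : C) : C :=
  (exp (Re w) * cos (Im w), exp (Re w) * sin (Im w)).

Definition Cpow_real (z : C) (s : R) : C :=
  Cexp (RtoC s * (RtoC (ln (Cmod z)) + (0, 1) * RtoC (Carg z)))%C.

Definition in_l2 (x : nat -> C) : Prop :=
  ex_series (fun k => (Cmod (x k)) ^ 2).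

Definition l2norm (x : nat -> C) : R :=
  sqrt (Series (fun k => (Cmod (x k)) ^ 2)).

(* Operator norm on l^2 of the diagonal operator with entries d
   (value in Rbar, +oo if unbounded). *)
Definition diag_opnorm (d : nat -> C) : Rbar :=
  Lub_Rbar (fun r => exists x, in_l2 x /\ l2norm x <= 1 /\
                          r = l2norm (fun k => (d k * x k)%C)).

Definition lam (gamma : R) (k : nat) : C := (- gamma, INR k).

(* Diagonal entries of e^{A^{-1} t} (-A)^{-alpha}:
   e^{t / lambda_k} (-lambda_k)^{-alpha} (principal branch). *)
Definition semigroup_entry (gamma alpha t : R) (k : nat) : C :=
  (Cexp (RtoC t / lam gamma k) * Cpow_real (- lam gamma k) (- alpha))%C.

Definition liminf_ge (f : R -> Rbar) (L : R) : Prop :=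
  forall eps : R, 0 < eps ->
    exists T : R, forall t : R, T <= t -> Rbar_le (Finite (L - eps)) (f t).

(* The norm of a diagonal operator dominates each of its entries.  With
   s_k = gamma^2 + k^2 one has t^(alpha/2) |e^(t/lambda_k) (-lambda_k)^(-alpha)|
   = f (t / s_k), where f u = u^(alpha/2) e^(-gamma u) attains its maximum
   (alpha / (2 e gamma))^(alpha/2) at u0 = alpha / (2 gamma).  Since the gaps
   s_(k+1) - s_k = 2k + 1 are small compared to s_k, for large t some ratio
   t / s_k lies in [e^(-delta) u0, u0], where f is at least e^(-alpha delta/2) f u0. *)
From Stdlib Require Import Reals Lra Lia ZArith.
From Coquelicot Require Import Coquelicot.
Open Scope R_scope.

Definition delta_seq (k : nat) (c : R) (n : nat) : R :=
  if Nat.eq_dec n k then c else 0.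

Lemma sum_n_delta_seq k c n :
  sum_n (delta_seq k c) n = if le_dec k n then c else 0.
Proof.
  induction n as [|n IH].
  - rewrite sum_O; unfold delta_seq.
    destruct (Nat.eq_dec 0 k), (le_dec k 0); lia || reflexivity.
  - rewrite sum_Sn, IH; unfold delta_seq.
    destruct (Nat.eq_dec (S n) k), (le_dec k n), (le_dec k (S n));
      unfold plus; simpl; lia || lra.
Qed.

Lemma is_series_delta_seq k c : is_series (delta_seq k c) c.
Proof.
  change (is_lim_seq (sum_n (delta_seq k c)) c).
  apply is_lim_seq_ext_loc with (u := fun _ => c); [|apply is_lim_seq_const].
  exists k; intros n Hn; rewrite sum_n_delta_seq.
  destruct (le_dec k n); [reflexivity | lia].
Qed.

Lemma l2norm_single_support (x : nat -> C) k c : 0 <= c ->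
  (forall n, Cmod (x n) ^ 2 = delta_seq k (c ^ 2) n) ->
  in_l2 x /\ l2norm x = c.
Proof.
  intros Hc Hx; unfold in_l2, l2norm; rewrite (Series_ext _ _ Hx); split.
  - exists (c ^ 2); apply (is_series_ext (delta_seq k (c ^ 2))).
    + intros n; now rewrite Hx.
    + apply is_series_delta_seq.
  - rewrite (is_series_unique _ _ (is_series_delta_seq k _)).
    now apply sqrt_pow2.
Qed.

Lemma diag_opnorm_ge_entry (d : nat -> C) k :
  Rbar_le (Finite (Cmod (d k))) (diag_opnorm d).
Proof.
  unfold diag_opnorm; apply Lub_Rbar_correct.
  set (e := fun n => if Nat.eq_dec n k then RtoC 1 else RtoC 0).
  assert (He : in_l2 e /\ l2norm e = 1).
  { apply l2norm_single_support with k; [lra|].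
    intros n; unfold e, delta_seq.
    destruct (Nat.eq_dec n k); simpl; [rewrite Cmod_1 | rewrite Cmod_0]; ring. }
  assert (Hde : l2norm (fun n => (d n * e n)%C) = Cmod (d k)).
  { apply l2norm_single_support with k; [apply Cmod_ge_0|].
    intros n; unfold e, delta_seq.
    destruct (Nat.eq_dec n k) as [->|_].
    - now rewrite Cmult_1_r.
    - rewrite Cmult_0_r, Cmod_0; simpl; ring. }
  exists e; split; [apply He|]; split; [lra|]; now rewrite Hde.
Qed.

Lemma Cmod_Cexp w : Cmod (Cexp w) = exp (Re w).
Proof.
  unfold Cexp, Cmod; cbn [fst snd].
  replace ((exp (Re w) * cos (Im w)) ^ 2 + (exp (Re w) * sin (Im w)) ^ 2)
    with (exp (Re w) ^ 2 * (sin (Im w) ^ 2 + cos (Im w) ^ 2)) by ring.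
  rewrite <- !Rsqr_pow2, sin2_cos2, Rmult_1_r, Rsqr_pow2.
  apply sqrt_pow2, Rlt_le, exp_pos.
Qed.

Lemma Cmod_semigroup_entry gamma alpha t k : 0 < gamma ->
  Cmod (semigroup_entry gamma alpha t k) =
  exp (- gamma * (t / (gamma ^ 2 + INR k ^ 2))) *
  Rpower (gamma ^ 2 + INR k ^ 2) (- (alpha / 2)).
Proof.
  intros Hg.
  set (s := gamma ^ 2 + INR k ^ 2).
  assert (Hs : 0 < s) by (unfold s; pose proof (pow2_ge_0 (INR k)); nra).
  assert (Hmod : Cmod (- lam gamma k) = sqrt s).
  { unfold Cmod, lam, s; simpl; f_equal; ring. }
  assert (Hln : ln (sqrt s) = ln s / 2).
  { rewrite <- Rpower_sqrt, ln_Rpower by exact Hs; lra. }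
  unfold semigroup_entry, Cpow_real, Rpower.
  rewrite Cmod_mult, !Cmod_Cexp, Hmod, Hln.
  f_equal; f_equal; unfold lam, s; simpl.
  - field; unfold s in Hs; simpl in Hs; nra.
  - field.
Qed.

Definition profile (gamma alpha u : R) : R :=
  Rpower u (alpha / 2) * exp (- gamma * u).

Lemma scaled_Cmod_semigroup_entry gamma alpha t k : 0 < gamma -> 0 < t ->
  Rpower t (alpha / 2) * Cmod (semigroup_entry gamma alpha t k) =
  profile gamma alpha (t / (gamma ^ 2 + INR k ^ 2)).
Proof.
  intros Hg Ht.
  assert (Hs : 0 < gamma ^ 2 + INR k ^ 2).
  { pose proof (pow2_ge_0 (INR k)); nra. }
  rewrite Cmod_semigroup_entry by exact Hg.
  unfold profile, Rpower; rewrite ln_div by assumption.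
  rewrite <- !exp_plus; f_equal; field; lra.
Qed.

Lemma profile_at_max gamma alpha : 0 < gamma -> 0 < alpha ->
  profile gamma alpha (alpha / (2 * gamma)) =
  Rpower (alpha / (2 * exp 1 * gamma)) (alpha / 2).
Proof.
  intros Hg Ha.
  assert (He : exp (- gamma * (alpha / (2 * gamma))) = Rpower (/ exp 1) (alpha / 2)).
  { unfold Rpower; rewrite ln_Rinv, ln_exp by apply exp_pos; f_equal; field; lra. }
  unfold profile; rewrite He, Rpower_mult_distr.
  - f_equal; field; split; [lra | apply Rgt_not_eq, exp_pos].
  - apply Rdiv_lt_0_compat; lra.
  - apply Rinv_0_lt_compat, exp_pos.
Qed.

Lemma exp_le_compat x y : x <= y -> exp x <= exp y.
Proof. intros [Hlt | ->]; [left; now apply exp_increasing | lra]. Qed.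

Lemma profile_ge_near gamma alpha u0 delta u : 0 <= gamma -> 0 <= alpha ->
  0 < u0 -> u0 * exp (- delta) <= u <= u0 ->
  exp (- (alpha / 2 * delta)) * profile gamma alpha u0 <= profile gamma alpha u.
Proof.
  intros Hg Ha Hu0 [Hlo Hhi].
  assert (Hln : ln u0 - delta <= ln u).
  { replace (ln u0 - delta) with (ln (u0 * exp (- delta)))
      by (rewrite ln_mult, ln_exp by (lra || apply exp_pos); ring).
    apply ln_le; [apply Rmult_lt_0_compat; [lra | apply exp_pos] | exact Hlo]. }
  unfold profile, Rpower; rewrite <- !exp_plus.
  apply exp_le_compat; nra.
Qed.

Lemma exists_nat_between x : 0 <= x -> exists k : nat, x <= INR k <= x + 1.
Proof.
  intros Hx; destruct (archimed x) as [Hup1 Hup2].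
  assert (Hup : (0 <= up x)%Z) by (apply le_IZR; lra).
  exists (Z.to_nat (up x)); rewrite INR_IZR_INZ, Z2Nat.id by exact Hup; lra.
Qed.

Lemma exists_shifted_square_between c m : 0 <= c -> 0 < m ->
  exists A, 0 < A /\ forall a, A <= a ->
    exists k : nat, a <= c + INR k ^ 2 <= (1 + m) * a.
Proof.
  intros Hc Hm.
  assert (H9 : 0 < 9 / m ^ 2) by (apply Rdiv_lt_0_compat; nra).
  exists (c + 1 + 9 / m ^ 2); split; [lra|]; intros a Ha.
  set (x := sqrt (a - c)); set (y := sqrt a).
  assert (Hxx : x * x = a - c) by (apply sqrt_sqrt; lra).
  assert (Hyy : y * y = a) by (apply sqrt_sqrt; lra).
  assert (Hx0 : 0 <= x) by apply sqrt_pos.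
  assert (Hxy : x <= y) by (apply sqrt_le_1_alt; lra).
  assert (Hy1 : 1 <= y) by nra.
  assert (Hmy : 3 <= m * y).
  { assert (Hma : 9 <= a * m ^ 2).
    { apply Rmult_le_reg_r with (/ m ^ 2); [apply Rinv_0_lt_compat; nra|].
      replace (a * m ^ 2 * / m ^ 2) with a by (field; lra); unfold Rdiv in Ha; lra. }
    assert (0 <= m * y) by nra; nra. }
  destruct (exists_nat_between x Hx0) as [k Hk].
  exists k; split; nra.
Qed.

Lemma ratio_in_window u0 delta t s : 0 < u0 -> 0 < s ->
  t / u0 <= s <= exp delta * (t / u0) -> u0 * exp (- delta) <= t / s <= u0.
Proof.
  intros Hu0 Hs [Hlo Hhi]; rewrite exp_Ropp; split.
  - apply (Rle_div_r _ _ s); [exact Hs|].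
    apply Rle_trans with (u0 * / exp delta * (exp delta * (t / u0))).
    + apply Rmult_le_compat_l; [|exact Hhi].
      apply Rmult_le_pos; [lra | apply Rlt_le, Rinv_0_lt_compat, exp_pos].
    + right; field; split; [lra | apply Rgt_not_eq, exp_pos].
  - apply (Rle_div_l t u0 s); [exact Hs|].
    apply Rle_div_l in Hlo; [lra | exact Hu0].
Qed.

Lemma scaled_entry_near_max gamma alpha eps : 0 < gamma -> 0 < alpha -> 0 < eps ->
  exists T, forall t, T <= t -> exists k : nat,
    Rpower (alpha / (2 * exp 1 * gamma)) (alpha / 2) - eps <=
    Rpower t (alpha / 2) * Cmod (semigroup_entry gamma alpha t k).
Proof.
  intros Hg Ha Heps.
  set (L := Rpower (alpha / (2 * exp 1 * gamma)) (alpha / 2)).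
  assert (HL : 0 < L) by apply exp_pos.
  set (u0 := alpha / (2 * gamma)).
  assert (Hu0 : 0 < u0) by (apply Rdiv_lt_0_compat; lra).
  (* chosen so that e^(-alpha delta / 2) = e^(-eps / L) >= 1 - eps / L *)
  set (delta := 2 * eps / (alpha * L)).
  assert (Hdelta : 0 < delta) by (apply Rdiv_lt_0_compat; nra).
  assert (Hm : 0 < exp delta - 1) by (pose proof (exp_ineq1_le delta); lra).
  destruct (exists_shifted_square_between (gamma ^ 2) (exp delta - 1))
    as [A [HA HAa]]; [apply pow2_ge_0 | exact Hm |].
  exists (u0 * A); intros t Ht.
  assert (Ht0 : 0 < t) by nra.
  destruct (HAa (t / u0)) as [k [Hlo Hhi]].
  { apply Rmult_le_reg_l with u0; [exact Hu0|].
    replace (u0 * (t / u0)) with t by (field; lra); lra. }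
  exists k; rewrite scaled_Cmod_semigroup_entry by assumption.
  set (s := gamma ^ 2 + INR k ^ 2) in *.
  assert (Hs : 0 < s) by (apply Rlt_le_trans with (t / u0); [apply Rdiv_lt_0_compat|]; lra).
  replace (1 + (exp delta - 1)) with (exp delta) in Hhi by ring.
  assert (Hu := ratio_in_window u0 delta t s Hu0 Hs (conj Hlo Hhi)).
  apply Rle_trans with (exp (- (alpha / 2 * delta)) * L).
  - replace (alpha / 2 * delta) with (eps / L) by (unfold delta; field; lra).
    pose proof (exp_ineq1_le (- (eps / L))).
    replace (L - eps) with (L * (1 + - (eps / L))) by (field; lra); nra.
  - unfold L; rewrite <- profile_at_max by assumption.
    apply profile_ge_near; [lra | lra | exact Hu0 | exact Hu].
Qed.

Lemma Rbar_mult_le_compat_finite x y (N : Rbar) : 0 < x ->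
  Rbar_le (Finite y) N -> Rbar_le (Finite (x * y)) (Rbar_mult (Finite x) N).
Proof.
  intros Hx HN; destruct N as [r | |]; simpl in *.
  - apply Rmult_le_compat_l; lra.
  - destruct (Rle_dec 0 x) as [Hx0 | ]; [|lra].
    destruct (Rle_lt_or_eq_dec 0 x Hx0); [exact I | lra].
  - contradiction.
Qed.

Theorem mainTheorem3 (gamma alpha : R) (hgamma : 0 < gamma) (halpha : 0 < alpha) :
  liminf_ge
    (fun t => Rbar_mult (Finite (Rpower t (alpha / 2)))
                        (diag_opnorm (semigroup_entry gamma alpha t)))
    (Rpower (alpha / (2 * exp 1 * gamma)) (alpha / 2)).
Proof.
  intros eps Heps.
  destruct (scaled_entry_near_max gamma alpha eps hgamma halpha Heps) as [T HT].
  exists T; intros t Ht.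
  destruct (HT t Ht) as [k Hk].
  eapply Rbar_le_trans;
    [| apply Rbar_mult_le_compat_finite, diag_opnorm_ge_entry; apply exp_pos].
  exact Hk.
Qed.
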